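(* Let $X$ be an L-space and $Y$ its spatial part. (1) If $X$ is a zero-dimensional L-space, then $Y$ is a zero-dimensional topological space. (2) If $X$ is an SL-space, then $X$ is a zero-dimensional L-space if and only if $Y$ is zero-dimensional.
   Context: A Priestley space is a Stone space $X$ with a partial order such that clopen upsets separate points. An L-space is a Priestley space in which the downset of each clopen set is clopen and the closure of each open upset is open. ${\sf ClopUp}(X)$ is the set of clopen upsets. The spatial part of $X$ is $Y=\{y\in X\mid{\downarrow}y\text{ is clopen}\}$, topologized by declaring $V\subseteq Y$ open iff $V=U\cap Y$ for some $U\in{\sf ClopUp}(X)$. $X$ is an SL-space if $Y$ is dense in $X$. A biset is a set that is both an upset and a downset; ${\sf ClopBi}(X)$ is the set of clopen bisets; for $U\in{\sf ClopUp}(X)$, $\mathrm{cen}\,U=\bigcup\{V\in{\sf ClopBi}(X)\mid V\subseteq U\}$. $X$ is a zero-dimensional L-space if $\mathrm{cen}\,U$ is dense in $U$ for every $U\in{\sf ClopUp}(X)$. A topological space is zero-dimensional if it has a basis of clopen sets. *)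

From HB Require Import structures.
From mathcomp Require Import all_boot all_order.
From mathcomp Require Import boolp classical_sets topology.

Set Implicit Arguments.
Unset Strict Implicit.
Unset Printing Implicit Defensive.

Local Open Scope classical_set_scope.

Section Defs.
Context {T : topologicalType} (le : T -> T -> Prop).

Definition partial_order : Prop :=
  (forall x, le x x) /\ (forall x y, le x y -> le y x -> x = y) /\
  (forall x y z, le x y -> le y z -> le x z).

Definition upset (A : set T) : Prop := forall x y, A x -> le x y -> A y.
Definition downset (A : set T) : Prop := forall x y, A x -> le y x -> A y.
Definition biset (A : set T) : Prop := upset A /\ downset A.

Definition down (A : set T) : set T := [set y | exists2 x, A x & le y x].

Definition clopen_upset (U : set T) : Prop := clopen U /\ upset U.

Definition clopen_basis : Prop :=
  forall (U : set T) x, open U -> U x -> exists V, clopen V /\ V x /\ V `<=` U.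

Definition stone_space : Prop :=
  compact [set: T] /\ hausdorff_space T /\ clopen_basis.

Definition priestley : Prop :=
  stone_space /\ partial_order /\
  (forall x y, ~ le x y -> exists U, clopen_upset U /\ U x /\ ~ U y).

Definition L_space : Prop :=
  priestley /\
  (forall U, clopen U -> clopen (down U)) /\
  (forall U, open U -> upset U -> open (closure U)).

Definition spatial : set T := [set y | clopen (down [set y])].

Definition openY (V : set T) : Prop :=
  exists U, clopen_upset U /\ V = U `&` spatial.

(* Y is zero-dimensional: it has a basis of clopen (in Y) sets *)
Definition zero_dim_Y : Prop :=
  forall V y, openY V -> V y ->
    exists W, openY W /\ openY (spatial `\` W) /\ W y /\ W `<=` V.

Definition SL_space : Prop := L_space /\ closure spatial = [set: T].

Definition cen (U : set T) : set T :=
  \bigcup_(V in [set V | clopen V /\ biset V /\ V `<=` U]) V.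

Definition zero_dim_L_space : Prop :=
  L_space /\ (forall U, clopen_upset U -> U `<=` closure (cen U)).

End Defs.

From Pilot Require Import Defs.
From mathcomp Require Import all_boot boolp classical_sets topology.

(* If cen U is dense in the clopen upset U, a spatial point y of U has the open
   neighbourhood ↓y, which therefore meets a clopen biset V ⊆ U; V is an upset,
   so it contains y, and V ∩ Y is clopen in Y because ~` V is again a clopen
   upset.  Conversely, when Y is dense a clopen set is determined by its trace
   on Y.  So if U1 ∩ Y is clopen in Y with complement U2 ∩ Y (U1, U2 clopen
   upsets), then U1 = ~` U2 is also a downset: every clopen subset of Y is the
   trace of a clopen biset, and density of Y puts such bisets inside any clopen
   upset, near any of its points. *)

Set Implicit Arguments.
Unset Strict Implicit.
Unset Printing Implicit Defensive.

Local Open Scope classical_set_scope.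

Section DenseSubset.
Context {T : topologicalType} (S : set T).
Hypothesis closureS : closure S = [set: T].

Lemma dense_closureT : dense S.
Proof.
move=> O [z Oz] oO.
have /(_ O) [|y [Sy Oy]] : closure S z by rewrite closureS.
  by apply: open_nbhs_nbhs.
by exists y.
Qed.

Lemma dense_open_subset_closed (A B : set T) :
  open A -> closed B -> A `&` S `<=` B -> A `<=` B.
Proof.
move=> oA cB sAB x Ax; apply: contrapT => nBx.
have oAB : open (A `&` ~` B) by apply: openI => //; rewrite openC.
have [y [[Ay nBy] Sy]] := dense_closureT (ex_intro _ x (conj Ax nBx)) oAB.
exact/nBy/sAB.
Qed.

Lemma dense_clopen_eq (A B : set T) :
  clopen A -> clopen B -> A `&` S = B `&` S -> A = B.
Proof.
move=> [oA cA] [oB cB] eAB; apply/seteqP; split.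
- by apply: dense_open_subset_closed => //; rewrite eAB => x [].
- by apply: dense_open_subset_closed => //; rewrite -eAB => x [].
Qed.

End DenseSubset.

Section OrderedSpace.
Context {T : topologicalType} (le : T -> T -> Prop).

Lemma upsetC (A : set T) : downset le A -> upset le (~` A).
Proof. by move=> dA x y nAx xy Ay; apply/nAx/(dA y). Qed.

Lemma downsetC (A : set T) : upset le A -> downset le (~` A).
Proof. by move=> uA x y nAx yx Ay; apply/nAx/(uA y). Qed.

Definition clopenY (W : set T) : Prop :=
  openY le W /\ openY le (spatial le `\` W).

Lemma clopenY_biset (V : set T) :
  clopen V -> biset le V -> clopenY (V `&` spatial le).
Proof.
move=> cV [uV dV]; split; first by exists V.
exists (~` V); split; first by split; [exact: clopenC | exact: upsetC].
by apply/seteqP; split=> t /=; tauto.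
Qed.

Lemma clopenY_biset_trace (W : set T) :
  closure (spatial le) = [set: T] -> clopenY W ->
  exists2 V, clopen V /\ biset le V & W = V `&` spatial le.
Proof.
move=> dY [[U1 [[cU1 uU1] ->]] [U2 [[cU2 uU2] eU2]]].
have cCU2 : clopen (~` U2) by exact: clopenC.
have U1E : U1 = ~` U2.
  apply: (dense_clopen_eq dY cU1 cCU2).
  apply/seteqP; split=> t [Ut Yt]; split=> //.
    by move=> U2t; have : (U2 `&` spatial le) t by []; rewrite -eU2 => -[_ []].
  apply: contrapT => nU1t; apply: Ut.
  by have [] : (U2 `&` spatial le) t by rewrite -eU2; split=> // -[].
by exists U1 => //; split=> //; split=> //; rewrite U1E; exact: downsetC.
Qed.

Lemma spatial_closure_cen (U : set T) (y : T) :
  (forall x, le x x) -> spatial le y -> closure (cen le U) y ->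
  exists2 V, [/\ clopen V, biset le V & V `<=` U] & V y.
Proof.
move=> refl [oY _] /(_ (Defs.down le [set y])) [|z [[V [cV [bV sVU]] Vz] [_ -> zy]]].
  by apply: open_nbhs_nbhs; split=> //; exists y.
by exists V; [split | exact: bV.1 zy].
Qed.

Lemma zero_dim_L_zero_dim_Y :
  (forall x, le x x) -> zero_dim_L_space le -> zero_dim_Y le.
Proof.
move=> refl [_ cenU] _ y [U [cU ->]] [Uy Yy].
have [V [cV bV sVU] Vy] := spatial_closure_cen refl Yy (cenU U cU y Uy).
have [oW oYW] := clopenY_biset cV bV.
exists (V `&` spatial le); split; [done | split; [done | split]].
- by split.
- by move=> t [Vt Yt]; split=> //; exact: sVU.
Qed.

Lemma zero_dim_Y_zero_dim_L :
  SL_space le -> zero_dim_Y le -> zero_dim_L_space le.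
Proof.
move=> [hL dY] hY; split=> // U [[oU cU] uU] x Ux B /nbhs_interior nB.
have oBU : open (B° `&` U) by apply: openI => //; exact: open_interior.
have BUx : (B° `&` U) x by split=> //; exact: nbhs_singleton.
have [y [[By Uy] Yy]] := dense_closureT dY (ex_intro _ x BUx) oBU.
have oUY : openY le (U `&` spatial le) by exists U.
have [W [oW [oYW [Wy sWU]]]] := hY _ y oUY (conj Uy Yy).
have [V [cV bV] WE] := clopenY_biset_trace dY (conj oW oYW).
have sVU : V `<=` U.
  apply: (dense_open_subset_closed dY cV.1 cU).
  by rewrite -WE => t /sWU [].
have Vy : V y by move: Wy; rewrite WE => -[].
exists y; split; last exact: interior_subset.
by exists V.
Qed.

End OrderedSpace.

Theorem theorem5p16 (T : topologicalType) (le : T -> T -> Prop) :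
  L_space le ->
  (zero_dim_L_space le -> zero_dim_Y le) /\
  (SL_space le -> (zero_dim_L_space le <-> zero_dim_Y le)).
Proof.
move=> [[_ [[refl _] _]] _].
split; first exact: zero_dim_L_zero_dim_Y.
move=> hSL; split; first exact: zero_dim_L_zero_dim_Y.
exact: zero_dim_Y_zero_dim_L.
Qed.
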